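(* Let $R$ be a finite commutative ring with identity. Then $$\chi\big(\mathrm{Reg}(\Gamma(R))\big)\le |J(R)|\,\chi\big(\mathrm{Reg}(\Gamma(R/J(R)))\big).$$ Moreover, if $2\notin Z(R)$, then $\chi\big(\mathrm{Reg}(\Gamma(R))\big)=\chi\big(\mathrm{Reg}(\Gamma(R/J(R)))\big)$.
   Context: For a commutative ring $S$, $Z(S)$ is the set of zero-divisors (including $0$), $\mathrm{Reg}(S)=S\setminus Z(S)$, and $J(S)$ is the Jacobson radical. The total graph $T(\Gamma(S))$ is the simple graph with vertex set $S$ in which distinct $x,y$ are adjacent iff $x+y\in Z(S)$; $\mathrm{Reg}(\Gamma(S))$ is its induced subgraph on $\mathrm{Reg}(S)$. $\chi$ denotes chromatic number. *)

From mathcomp Require Import all_boot all_order all_algebra.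
Set Implicit Arguments. Unset Strict Implicit. Unset Printing Implicit Defensive.
Import GRing.Theory.
Local Open Scope ring_scope.

Section Defs.
Variable S : finComNzRingType.

(* Z(S): zero-divisors, including 0 *)
Definition zdiv : {set S} := [set x | [exists y : S, (y != 0) && (x * y == 0)]].
Definition regs : {set S} := ~: zdiv.

Definition is_ideal (I : {set S}) : bool :=
  [&& (0 : S) \in I,
      [forall x, forall y, (x \in I) ==> (y \in I) ==> (x + y \in I)] &
      [forall r, forall x, (x \in I) ==> (r * x \in I)]].
Definition is_maximal_ideal (I : {set S}) : bool :=
  [&& is_ideal I, (1 : S) \notin I &
      [forall K : {set S}, (is_ideal K && (I \subset K)) ==> ((K == I) || (K == setT))]].
Definition jacobson : {set S} := \bigcap_(I : {set S} | is_maximal_ideal I) I.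

Definition reg_adj (x y : S) : bool :=
  [&& x \in regs, y \in regs, x != y & x + y \in zdiv].

(* proper k-colouring of Reg(Gamma(S)) (colours of vertices outside Reg(S) irrelevant) *)
Definition reg_colorable (k : nat) : bool :=
  [exists c : {ffun S -> 'I_k}, [forall x, forall y, reg_adj x y ==> (c x != c y)]].

Lemma reg_colorable_exists : exists k, reg_colorable k.
Proof.
exists #|S|; apply/existsP; exists [ffun x => enum_rank x].
apply/forallP => x; apply/forallP => y; apply/implyP => /and4P [_ _ nxy _].
by rewrite !ffunE; apply: contra nxy => /eqP/enum_rank_inj ->.
Qed.

Definition chi_reg : nat := ex_minn reg_colorable_exists.
End Defs.

From mathcomp Require Import all_boot all_order all_algebra.
Set Implicit Arguments. Unset Strict Implicit.
Import GRing.Theory.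
Local Open Scope ring_scope.

(* In a finite ring the non-zero-divisors are the units, and 1 + J(R) consists
   of units, so a surjection f : R -> R/J(R) preserves and reflects
   zero-divisors.  Hence whenever f x != f y, x and y are adjacent in
   Reg(Gamma(R)) iff f x and f y are adjacent in Reg(Gamma(R/J(R))).  Colouring
   x by the pair (x - s(f x), c(f x)), for a section s of f and a colouring c of
   the quotient, gives the bound |J(R)| * chi.  If 2 is regular, two vertices
   x, y in one fibre are never adjacent, since x + y and 2x have the same image,
   so c o f is already a proper colouring; conversely c' o s colours the
   quotient for any colouring c' of R. *)

Section RingFacts.
Variable R : finComNzRingType.
Implicit Types x y r : R.

Lemma nonzdivP x : reflect (exists y, x * y = 1) (x \notin zdiv R).
Proof.
apply: (iffP idP) => [x_reg | [y xy]].
  have mulx_inj : injective (fun y => x * y).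
    move=> a b /= /eqP; rewrite -subr_eq0 -mulrBr => /eqP xab0.
    apply/eqP; rewrite -subr_eq0; apply: contraR x_reg => nz_ab.
    by rewrite inE; apply/existsP; exists (a - b); rewrite nz_ab xab0 eqxx.
  by have [g _ gK] := injF_bij mulx_inj; exists (g 1); rewrite gK.
rewrite inE; apply/existsP => -[z /andP [/eqP nz_z /eqP xz0]]; apply: nz_z.
by rewrite -[z]mul1r -xy mulrAC xz0 mul0r.
Qed.

Lemma nonzdivM x y : x \notin zdiv R -> y \notin zdiv R -> x * y \notin zdiv R.
Proof.
move=> /nonzdivP [a xa] /nonzdivP [b yb]; apply/nonzdivP; exists (a * b).
by rewrite mulrACA xa yb mulr1.
Qed.

Lemma is_idealP (K : {set R}) :
  reflect [/\ 0 \in K, {in K &, forall x y, x + y \in K}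
            & forall r, {in K, forall x, r * x \in K}]
          (is_ideal K).
Proof.
apply: (iffP and3P) => -[K0 KD KM]; split=> //.
- by move=> x y xK yK; move/forallP/(_ x)/forallP/(_ y): KD; rewrite xK yK.
- by move=> r x xK; move/forallP/(_ r)/forallP/(_ x): KM; rewrite xK.
- by apply/forallP => x; apply/forallP => y; apply/implyP => xK; apply/implyP; apply: KD.
- by apply/forallP => r; apply/forallP => x; apply/implyP; apply: KM.
Qed.

Lemma is_ideal_principal x : is_ideal [set x * r | r : R].
Proof.
apply/is_idealP; split.
- by apply/imsetP; exists 0; rewrite ?mulr0.
- move=> _ _ /imsetP [a _ ->] /imsetP [b _ ->].
  by apply/imsetP; exists (a + b); rewrite ?mulrDr.
- move=> r _ /imsetP [a _ ->].
  by apply/imsetP; exists (r * a); rewrite // mulrCA.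
Qed.

(* A proper ideal of maximal cardinality among those containing I is maximal. *)
Lemma maximal_ideal_exists (I : {set R}) : is_ideal I -> 1 \notin I ->
  exists2 M : {set R}, is_maximal_ideal M & I \subset M.
Proof.
move=> idI I1; pose P (K : {set R}) := [&& is_ideal K, I \subset K & 1 \notin K].
have PI : P I by rewrite /P idI subxx.
case: (arg_maxnP (fun K : {set R} => #|K|) PI) => M /and3P [idM sIM M1] maxM.
exists M => //; apply/and3P; split=> //.
apply/forallP => K; apply/implyP => /andP [idK sMK].
have [_ _ KM] := is_idealP K idK.
have [K1 | K1] := boolP (1 \in K).
  by apply/orP; right; apply/eqP/setP => r; rewrite inE -[r]mulr1 KM.
apply/orP; left; rewrite eq_sym eqEcard sMK; apply: maxM.
by rewrite /P idK K1 (subset_trans sIM sMK).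
Qed.

Lemma jacobson_unit j : j \in jacobson R -> exists y, (1 + j) * y = 1.
Proof.
move=> jJ; case/boolP: [exists y, (1 + j) * y == 1] => [/existsP [y /eqP] | no_inv].
  by exists y.
have [|M maxM sIM] := maximal_ideal_exists (is_ideal_principal (1 + j)).
  by apply/imsetP => -[y _ e]; case/negP: no_inv; apply/existsP; exists y; rewrite -e.
have /and3P [idM M1 _] := maxM; have [_ MD MM] := is_idealP M idM.
have jM : j \in M by move/bigcapP: jJ; apply.
have ujM : 1 + j \in M by apply: (subsetP sIM); apply/imsetP; exists 1; rewrite ?mulr1.
by case/negP: M1; rewrite -(addrK j 1) MD // -mulN1r MM.
Qed.

End RingFacts.

Section Colourings.
Variable R : finComNzRingType.

Definition proper_colouring (T : eqType) (c : R -> T) : Prop :=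
  forall x y, reg_adj x y -> c x != c y.

Lemma chi_reg_le_card (T : finType) (c : R -> T) :
  proper_colouring c -> (chi_reg R <= #|T|)%N.
Proof.
move=> c_proper; rewrite /chi_reg; case: ex_minnP => m _; apply.
apply/existsP; exists [ffun x => enum_rank (c x)].
apply/forallP => x; apply/forallP => y; apply/implyP => xy.
by rewrite !ffunE; apply: contra (c_proper x y xy) => /eqP/enum_rank_inj ->.
Qed.

Lemma chi_reg_colouring : exists c : R -> 'I_(chi_reg R), proper_colouring c.
Proof.
rewrite /chi_reg; case: ex_minnP => m /existsP [c /forallP c_proper] _.
by exists c => x y xy; move/forallP/(_ y): (c_proper x); rewrite xy.
Qed.

End Colourings.

Section JacobsonQuotient.
Variables (R S : finComNzRingType) (f : {rmorphism R -> S}).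
Hypothesis f_surj : forall s : S, exists r : R, f r = s.
Hypothesis f_ker : forall r : R, (f r == 0) = (r \in jacobson R).

Definition lift (s : S) : R := odflt 0 [pick r | f r == s].

Lemma liftK : cancel lift f.
Proof.
move=> s; rewrite /lift; case: pickP => [r /eqP // | no_pre].
by have [r fr] := f_surj s; move: (no_pre r); rewrite fr eqxx.
Qed.

Lemma sub_lift_jacobson x : x - lift (f x) \in jacobson R.
Proof. by rewrite -f_ker rmorphB liftK subrr. Qed.

Lemma zdiv_rmorph x : (f x \in zdiv S) = (x \in zdiv R).
Proof.
apply/idP/idP; apply: contraLR => /nonzdivP [y xy]; apply/nonzdivP.
  by exists (f y); rewrite -rmorphM xy rmorph1.
have /jacobson_unit [z] : x * lift y - 1 \in jacobson R.
  by rewrite -f_ker rmorphB rmorph1 rmorphM liftK xy subrr.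
by rewrite addrC subrK => xyz; exists (lift y * z); rewrite mulrA.
Qed.

Lemma reg_adj_rmorph x y : f x != f y -> reg_adj (f x) (f y) = reg_adj x y.
Proof.
move=> fxy; have xy : x != y by apply: contraNneq fxy => ->.
by rewrite /reg_adj /regs !in_setC -rmorphD !zdiv_rmorph fxy xy.
Qed.

Lemma reg_adj_lift s t : reg_adj (lift s) (lift t) = reg_adj s t.
Proof.
have [<- | st] := eqVneq s t; first by rewrite /reg_adj !eqxx !andbF.
by rewrite -reg_adj_rmorph !liftK.
Qed.

Lemma reg_adj_fibre x y : 2%:R \notin zdiv R -> reg_adj x y -> f x != f y.
Proof.
move=> two_reg /and4P [x_reg _ _ xy_zd]; apply: contraTneq xy_zd => fxy.
rewrite in_setC in x_reg; rewrite -zdiv_rmorph rmorphD -fxy -mulr2n -mulr_natl.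
by rewrite -(rmorph_nat f) -rmorphM zdiv_rmorph (nonzdivM two_reg).
Qed.

Lemma chi_reg_le_jacobson : (chi_reg R <= #|jacobson R| * chi_reg S)%N.
Proof.
have [c c_proper] := chi_reg_colouring S.
pose T := ({j : R | j \in jacobson R} * 'I_(chi_reg S))%type.
pose d x : T := (Sub (x - lift (f x)) (sub_lift_jacobson x), c (f x)).
rewrite -[X in (_ * X)%N]card_ord -[#|jacobson R|]card_sig -card_prod.
apply: (@chi_reg_le_card _ T d) => x y xy; rewrite xpair_eqE negb_and.
have [fxy | fxy] := eqVneq (f x) (f y).
  apply/orP; left; apply: contraTneq xy => /(congr1 val) /= /eqP.
  by rewrite fxy (can_eq (subrK _)) => /eqP ->; rewrite /reg_adj eqxx !andbF.
by rewrite c_proper ?orbT // reg_adj_rmorph.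
Qed.

Lemma chi_reg_quotient_le : (chi_reg S <= chi_reg R)%N.
Proof.
have [c c_proper] := chi_reg_colouring R.
rewrite -[X in (_ <= X)%N]card_ord; apply: (chi_reg_le_card (c := c \o lift)).
by move=> s t st; apply: c_proper; rewrite reg_adj_lift.
Qed.

Lemma chi_reg_le_quotient : 2%:R \notin zdiv R -> (chi_reg R <= chi_reg S)%N.
Proof.
move=> two_reg; have [c c_proper] := chi_reg_colouring S.
rewrite -[X in (_ <= X)%N]card_ord; apply: (chi_reg_le_card (c := c \o f)).
move=> x y xy; have fxy := reg_adj_fibre two_reg xy.
by apply: c_proper; rewrite reg_adj_rmorph.
Qed.

End JacobsonQuotient.

Theorem lemma17 (R S : finComNzRingType) (f : {rmorphism R -> S}) :
  (forall s : S, exists r : R, f r = s) ->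
  (forall r : R, (f r == 0) = (r \in jacobson R)) ->
  (chi_reg R <= #|jacobson R| * chi_reg S)%N /\
  ((2%:R : R) \notin zdiv R -> chi_reg R = chi_reg S).
Proof.
move=> f_surj f_ker; split; first exact: chi_reg_le_jacobson f_surj f_ker.
move=> two_reg; apply/eqP; rewrite eqn_leq.
by rewrite (chi_reg_le_quotient f_surj f_ker) // (chi_reg_quotient_le f_surj f_ker).
Qed.
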